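(* Let $(c_t)_{t\ge0}$ be a solution to Smoluchowski's equation with multiplicative kernel (in the sense defined in the context) with initial condition $c_0$ satisfying $\langle c_0,m^2\rangle=\sum_{m\ge1}m^2c_0(m)<\infty$. Then $t\mapsto\langle c_t,m^2\rangle$ is bounded in a neighborhood of $0$, i.e. there is $\varepsilon>0$ with $\sup_{t\in[0,\varepsilon]}\sum_{m\ge1}m^2 c_t(m)<\infty$.
   Context: For $f,g:\mathbb{N}\to\mathbb{R}^+$ write $\langle f,g\rangle=\sum_{m\ge1}f(m)g(m)$, and write $m$, $m^2$ for the functions $m\mapsto m$, $m\mapsto m^2$. A family $(c_t(m),m\ge1)_{t\ge0}$ of nonnegative functions, each $t\mapsto c_t(m)$ continuous, is a solution to Smoluchowski's equation with initial condition $c_0\in[0,\infty)^{\mathbb{N}}$ if (i) for every $t\ge0$, $\int_0^t\langle m,c_s\rangle^2\,ds<\infty$, and (ii) for every $t\ge0$ and every $f:\mathbb{N}\to[0,\infty)$ with finite support, \[ \langle c_t,f\rangle-\langle c_0,f\rangle=\frac12\int_0^t\sum_{m,m'\ge1}mm'c_s(m)c_s(m')\big(f(m+m')-f(m)-f(m')\big)\,ds. \] *)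

From HB Require Import structures.
From mathcomp Require Import all_boot all_order all_algebra.
From mathcomp Require Import all_classical all_reals all_analysis.
Set Implicit Arguments. Unset Strict Implicit. Unset Printing Implicit Defensive.
Import Order.TTheory GRing.Theory Num.Theory numFieldNormedType.Exports.
Local Open Scope classical_set_scope.
Local Open Scope ring_scope.
Local Open Scope ereal_scope.

(* <c, f> = sum_{m >= 1} f(m) c(m), as an extended real (series of
   the partial sums; for nonnegative terms it is the sum in [0, +oo]). *)
Definition pairing {R : realType} (c f : nat -> R) : \bar R :=
  \sum_(1 <= m <oo) ((f m * c m)%R)%:E.

Definition mom1 {R : realType} (c : nat -> R) : \bar R :=
  pairing c (fun m => m%:R).
Definition mom2 {R : realType} (c : nat -> R) : \bar R :=
  pairing c (fun m => (m%:R ^+ 2)%R).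

Definition coag_term {R : realType} (c f : nat -> R) : \bar R :=
  \sum_(1 <= m <oo) \sum_(1 <= m' <oo)
     ((m%:R * m'%:R * c m * c m' * (f (m + m')%N - f m - f m'))%R)%:E.

Definition fin_supp {R : realType} (f : nat -> R) : Prop :=
  exists K : nat, forall m, (K < m)%N -> f m = 0%R.

Definition smol_solution {R : realType} (c : R -> nat -> R) : Prop :=
  (forall t m, (0 <= t)%R -> (0 <= c t m)%R) /\
  (forall m, {within (`[0%R, +oo[ : set R)%classic, continuous (fun t : R => c t m)}) /\
  (forall t, (0 <= t)%R ->
     \int[lebesgue_measure]_(s in `[0%R, t]) (mom1 (c s) * mom1 (c s)) < +oo) /\
  (forall t (f : nat -> R), (0 <= t)%R ->
     (forall m, (0 <= f m)%R) -> fin_supp f ->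
     pairing (c t) f - pairing (c 0%R) f =
       (2^-1)%:E * \int[lebesgue_measure]_(s in `[0%R, t]) coag_term (c s) f).

From HB Require Import structures.
From mathcomp Require Import all_boot all_order all_algebra.
From mathcomp Require Import all_classical all_reals all_analysis.
From mathcomp Require Import ring lra.
Import Order.TTheory GRing.Theory Num.Theory numFieldNormedType.Exports.
Local Open Scope classical_set_scope.
Local Open Scope ring_scope.
Local Open Scope ereal_scope.

(* Test the weak formulation against the truncated square f_K m = m^2 [m <= K].
   Since (m + m')^2 - m^2 - m'^2 = 2 m m', and the increment of f_K is
   nonpositive as soon as m or m' exceeds K, the coagulation term is at most
   2 u_K^2 where u_K t = <c_t, f_K>; hence u_K t <= u_K 0 + \int_0^t u_K^2.
   With A = <c_0, m^2> + 1, a continuity argument keeps u_K below 2 A on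
   [0, 1/(8 A)], uniformly in K, and letting K grow bounds <c_t, m^2>. *)

Section truncation.
Context {R : realType}.

Lemma eseries_le_npos_tail (u : nat -> \bar R) N :
  (1 <= N)%N -> (forall n, (N <= n)%N -> u n <= 0) ->
  \sum_(1 <= i <oo) u i <= \sum_(1 <= i < N) u i.
Proof.
move=> N1 u_npos.
have tail_le0 m n : (N <= m)%N -> \sum_(m <= i < n) u i <= 0.
  move=> Nm; rewrite big_nat_cond; apply: sume_le0 => i /andP[/andP[mi _] _].
  exact/u_npos/(leq_trans Nm).
have split_at n : (N <= n)%N ->
    \sum_(1 <= i < n) u i = \sum_(1 <= i < N) u i + \sum_(N <= i < n) u i.
  by move=> Nn; rewrite -big_cat_nat.
have noninc : nonincreasing_seq (fun n => \sum_(1 <= i < n + N) u i).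
  move=> m n mn; rewrite (big_cat_nat _ (n := m + N)) /=.
  - by apply: geeDl; apply: tail_le0; rewrite leq_addl.
  - by rewrite (leq_trans N1) // leq_addl.
  - by rewrite leq_add2r.
have cvg_sums : cvgn (fun n => \sum_(1 <= i < n) u i).
  have /cvg_ex[l shifted_cvg] := ereal_nonincreasing_is_cvgn noninc.
  by apply/cvg_ex; exists l; rewrite -(cvg_shiftn N).
apply: lime_le => //; exists N => // n /= Nn.
by rewrite split_at // geeDl // tail_le0.
Qed.

Lemma eseries2_le_box (u : nat -> nat -> \bar R) N : (1 <= N)%N ->
  (forall m m', (N <= m)%N || (N <= m')%N -> u m m' <= 0) ->
  \sum_(1 <= m <oo) \sum_(1 <= m' <oo) u m m' <=
    \sum_(1 <= m < N) \sum_(1 <= m' < N) u m m'.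
Proof.
move=> N1 u_npos.
have row_le m : \sum_(1 <= m' <oo) u m m' <= \sum_(1 <= m' < N) u m m'.
  by apply: eseries_le_npos_tail => // m' Nm'; rewrite u_npos // Nm' orbT.
apply: le_trans (eseries_le_npos_tail _ _ N1 _) _; last by apply: lee_sum => m _.
move=> m Nm; apply: le_trans (eseries_le_npos_tail _ _ (leqnn 1) _) _.
  by move=> m' _; rewrite u_npos // Nm.
by rewrite big_geq.
Qed.

Definition trunc_sqr (K m : nat) : R := if (m <= K)%N then (m%:R ^+ 2)%R else 0%R.

Definition mom2_trunc (K : nat) (cs : nat -> R) : R :=
  (\sum_(1 <= m < K.+1) m%:R ^+ 2 * cs m)%R.

Lemma trunc_sqr_ge0 K m : (0 <= trunc_sqr K m)%R.
Proof. by rewrite /trunc_sqr; case: ifP => // _; exact: sqr_ge0. Qed.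

Lemma fin_supp_trunc_sqr K : fin_supp (trunc_sqr K).
Proof. by exists K => m Km; rewrite /trunc_sqr leqNgt Km. Qed.

Lemma trunc_sqr_increment_le K m m' :
  (trunc_sqr K (m + m') - trunc_sqr K m - trunc_sqr K m' <=
    if (m <= K)%N && (m' <= K)%N then 2 * m%:R * m'%:R else 0)%R.
Proof.
have sq_ge0 n : (0 <= n%:R ^+ 2 :> R)%R by exact: sqr_ge0.
rewrite /trunc_sqr; case: (leqP m K) => mK; case: (leqP m' K) => m'K /=.
- case: leqP => _.
    by rewrite natrD sqrrD; lra.
  have : (0 <= 2 * m%:R * m'%:R :> R)%R by rewrite !mulr_ge0.
  by have := sq_ge0 m; have := sq_ge0 m'; lra.
- by rewrite leqNgt (leq_trans m'K) ?leq_addl //; have := sq_ge0 m; lra.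
- by rewrite leqNgt (leq_trans mK) ?leq_addr //; have := sq_ge0 m'; lra.
- by rewrite leqNgt (leq_trans mK) ?leq_addr //; lra.
Qed.

Lemma pairing_trunc_sqr K (cs : nat -> R) :
  pairing cs (trunc_sqr K) = (mom2_trunc K cs)%:E.
Proof.
rewrite /pairing; apply: cvg_lim => //; apply: cvg_near_cst; near=> n.
have Kn : (K.+1 <= n)%N by near: n; exists K.+1.
rewrite sumEFin; congr EFin; rewrite /mom2_trunc (big_cat_nat _ (n := K.+1)) //=.
rewrite [X in (_ + X)%R]big_nat_cond [X in (_ + X)%R]big1 ?addr0.
  by apply: eq_big_nat => m /andP[_ mK]; rewrite /trunc_sqr -ltnS mK.
by move=> m /andP[/andP[Km _] _]; rewrite /trunc_sqr leqNgt Km mul0r.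
Unshelve. all: by end_near. Qed.

Section nonnegative_sequence.
Variable cs : nat -> R.
Hypothesis cs_ge0 : forall m, (0 <= cs m)%R.

Lemma mom2_trunc_ge0 K : (0 <= mom2_trunc K cs)%R.
Proof. by apply: sumr_ge0 => m _; rewrite mulr_ge0 ?sqr_ge0. Qed.

Lemma mom2_trunc_le_mom2 K : (mom2_trunc K cs)%:E <= mom2 cs.
Proof.
rewrite /mom2 /pairing /mom2_trunc -sumEFin.
by apply: nneseries_lim_ge => n _ _; rewrite lee_fin mulr_ge0 ?sqr_ge0.
Qed.

Lemma mom2_le_trunc_bound B : (0 <= B)%R -> (forall K, mom2_trunc K cs <= B)%R ->
  mom2 cs <= B%:E.
Proof.
move=> B0 trunc_le; rewrite /mom2 /pairing; apply: lime_le.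
  by apply: is_cvg_nneseries => n _ _; rewrite lee_fin mulr_ge0 ?sqr_ge0.
apply: nearW => -[|K]; first by rewrite big_geq // lee_fin.
by rewrite sumEFin lee_fin; exact: trunc_le.
Qed.

Lemma coag_term_trunc_sqr_le K :
  coag_term cs (trunc_sqr K) <= (2 * mom2_trunc K cs ^+ 2)%:E.
Proof.
pose b m m' : R := (if (m <= K)%N && (m' <= K)%N
  then 2 * (m%:R ^+ 2 * cs m) * (m'%:R ^+ 2 * cs m') else 0)%R.
have term_le m m' : (m%:R * m'%:R * cs m * cs m' *
    (trunc_sqr K (m + m') - trunc_sqr K m - trunc_sqr K m') <= b m m')%R.
  have w_ge0 : (0 <= m%:R * m'%:R * cs m * cs m' :> R)%R by rewrite !mulr_ge0.
  apply: le_trans (ler_wpM2l w_ge0 (trunc_sqr_increment_le K m m')) _.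
  rewrite /b; case: ifP => _; last by rewrite mulr0.
  by rewrite le_eqVlt; apply/orP; left; apply/eqP; ring.
rewrite /coag_term; apply: le_trans (eseries2_le_box _ _ (ltn0Sn K) _) _.
  move=> m m' /orP mm'; rewrite lee_fin; apply: le_trans (term_le m m') _; rewrite /b.
  by case: ifP => // /andP[mK m'K]; case: mm'; rewrite ltnNge ?mK ?m'K.
under eq_bigr do rewrite sumEFin.
rewrite sumEFin lee_fin.
apply: le_trans (_ : _ <= \sum_(1 <= m < K.+1) \sum_(1 <= m' < K.+1) b m m')%R _.
  by apply: ler_sum => m _; apply: ler_sum => m' _; exact: term_le.
rewrite /mom2_trunc expr2 mulrA [(2 * _)%R]mulr_sumr mulr_suml.
apply: ler_sum_nat => m /andP[_]; rewrite ltnS => mK; rewrite mulr_sumr.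
by apply: ler_sum_nat => m' /andP[_]; rewrite ltnS => m'K; rewrite /b mK m'K.
Qed.

End nonnegative_sequence.
End truncation.

(* No measurability is required: [s |-> coag_term (c s) f] is not known to be
   measurable. *)
Lemma le_integral_ge0_majorant {R : realType} {d : measure_display}
    {T : measurableType d} (mu : {measure set T -> \bar R}) (D : set T)
    (f g : T -> \bar R) :
  (forall x, D x -> 0 <= g x) -> (forall x, D x -> f x <= g x) ->
  \int[mu]_(x in D) f x <= \int[mu]_(x in D) g x.
Proof.
move=> g_ge0 fg; rewrite integralE.
apply: (@le_trans _ _ (\int[mu]_(x in D) f^\+ x)).
  by apply: geeDl; rewrite oppe_le0; apply: integral_ge0 => x _; exact: funeneg_ge0.
rewrite ge0_integralE; last by move=> x _; exact: funepos_ge0.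
rewrite [X in _ <= X]ge0_integralE //.
apply: ereal_sup_le => _ [h h_le <-]; exists h => //= x.
apply: le_trans (h_le x) _; rewrite /patch; case: ifP => // /[!inE] Dx.
by rewrite funeposE ge_max fg //= g_ge0.
Qed.

Lemma integral_cst_itvcc {R : realType} (a b r : R) : (a <= b)%R ->
  \int[lebesgue_measure]_(x in `[a, b]) r%:E = (r * (b - a))%:E.
Proof.
move=> ab; rewrite integral_cst //= lebesgue_measure_itv /= lte_fin.
rewrite -EFinD; case: ltP => [_|ba]; first by rewrite EFinM.
by rewrite (@le_anti _ _ a b) ?ab ?ba // subrr mulr0 mule0.
Qed.

Lemma within_continuous_dist_lt {R : realType} (A : set R) (u : R -> R) x e :
  {within A, continuous u} -> A x -> (0 < e)%R ->
  exists2 d : R, (0 < d)%R &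
    forall s, A s -> (`|x - s| < d)%R -> (`|u x - u s| < e)%R.
Proof.
move=> u_cont Ax e0.
have /subspace_continuousP/(_ x Ax) := u_cont.
move=> /cvgr_dist_lt/(_ e e0); rewrite near_withinE.
case/nbhs_ballP => d d0 near_x; exists d => // s As xs.
by apply: near_x => //; rewrite -ball_normE.
Qed.

Lemma within_continuous_mom2_trunc {R : realType} (A : set R) (c : R -> nat -> R) K :
  (forall m, {within A, continuous (fun t => c t m)}) ->
  {within A, continuous (fun t => mom2_trunc K (c t))}.
Proof.
move=> c_cont; rewrite /mom2_trunc.
apply: continuous_big => [|m _ x]; first exact: add_continuous.
by apply: cvgM; [exact: cvg_cst | exact: c_cont].
Qed.

Lemma continuity_bootstrap {R : realType} (u : R -> R) (b B eps : R) :
  {within `[0%R, +oo[, continuous u} -> (b < B)%R -> (u 0 <= b)%R ->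
  (forall t, (0 <= t <= eps)%R ->
     (forall s, (0 <= s <= t)%R -> (u s <= B)%R) -> (u t <= b)%R) ->
  forall t, (0 <= t <= eps)%R -> (u t <= B)%R.
Proof.
move=> u_cont bB u0 step t1 /andP[t1_ge0 t1_eps].
rewrite leNgt; apply/negP => Bu1.
(* tau, the first time u exceeds B, is bounded by b by the step hypothesis,
   so by continuity u stays below B slightly beyond tau. *)
pose E := [set t : R | (0 <= t <= t1)%R /\ (B < u t)%R].
have Et1 : E t1 by split => //; rewrite t1_ge0 lexx.
have E_lb : has_lbound E by exists 0%R => y [/andP[]].
have tau_ge0 : (0 <= inf E)%R by apply: lb_le_inf; [exists t1 | move=> y [/andP[]]].
have tau_le : (inf E <= t1)%R by apply: ge_inf.
set tau := inf E in tau_ge0 tau_le.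
have le_B s : (0 <= s)%R -> (s < tau)%R -> (u s <= B)%R.
  move=> s0 s_tau; rewrite leNgt; apply/negP => Bus.
  have Es : E s by split => //; rewrite s0 (le_trans (ltW s_tau)).
  by have := ge_inf E_lb Es; rewrite leNgt s_tau.
have le_b s : (0 <= s)%R -> (s < tau)%R -> (u s <= b)%R.
  move=> s0 s_tau; apply: step.
    by rewrite s0 (le_trans (ltW s_tau)) // (le_trans tau_le).
  by move=> s' /andP[s'0 s's]; apply: le_B => //; exact: le_lt_trans s's s_tau.
have [d d0 near_tau] : exists2 d : R, (0 < d)%R & forall s, (0 <= s)%R ->
    (`|tau - s| < d)%R -> (`|u tau - u s| < B - b)%R.
  have Bb_gt0 : (0 < B - b)%R by rewrite subr_gt0.
  have [|d d0 near_tau] := within_continuous_dist_lt _ _ tau _ u_cont _ Bb_gt0.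
    by rewrite /= in_itv /= tau_ge0.
  by exists d => // s s0; apply: near_tau; rewrite /= in_itv /= s0.
have u_tau : (u tau <= B)%R.
  have [->|tau_neq0] := eqVneq tau 0%R; first exact: le_trans u0 (ltW bB).
  have tau_gt0 : (0 < tau)%R by rewrite lt_def tau_neq0.
  have [h [h_gt0 h_tau h_d]] : exists h : R, [/\ 0 < h, h < tau & h < d]%R.
    by case: (leP tau d) => td; [exists (tau / 2)%R | exists (d / 2)%R]; split; lra.
  have := le_b (tau - h)%R ltac:(lra) ltac:(lra).
  have := near_tau (tau - h)%R ltac:(lra); rewrite opprB addrC subrK gtr0_norm //.
  by move=> /(_ h_d); rewrite ltr_norml => /andP[_]; lra.
have u_tau_b : (u tau <= b)%R.
  apply: step => [|s /andP[s0]]; first by rewrite tau_ge0 (le_trans tau_le).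
  by rewrite le_eqVlt => /orP[/eqP->|]; [exact: u_tau | exact: le_B].
have [e Ee e_tau] := inf_adherent d0 (conj (ex_intro _ t1 Et1) E_lb).
rewrite -/tau in e_tau; have tau_e : (tau <= e)%R by apply: ge_inf.
case: Ee => /andP[e0 _] Bue.
have := near_tau e e0; rewrite ler0_norm; last by lra.
by move=> /(_ ltac:(lra)); rewrite ltr_norml => /andP[+ _]; lra.
Qed.

Lemma mom2_trunc_growth {R : realType} (c : R -> nat -> R) K (s B : R) :
  smol_solution c -> (0 <= s)%R ->
  (forall r, (0 <= r <= s)%R -> (mom2_trunc K (c r) <= B)%R) ->
  (mom2_trunc K (c s) <= mom2_trunc K (c 0%R) + B ^+ 2 * s)%R.
Proof.
move=> [c_ge0 [_ [_ weak_eq]]] s0 u_le.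
have := weak_eq s (trunc_sqr K) s0 (trunc_sqr_ge0 K) (fin_supp_trunc_sqr K).
rewrite !pairing_trunc_sqr -EFinB => coag_eq.
have coag_le : \int[lebesgue_measure]_(r in `[0%R, s]) coag_term (c r) (trunc_sqr K) <=
    (2 * B ^+ 2 * (s - 0))%:E.
  rewrite -integral_cst_itvcc //; apply: le_integral_ge0_majorant.
    by move=> r _; rewrite lee_fin mulr_ge0 ?sqr_ge0.
  move=> r; rewrite /= in_itv /= => /andP[r0 rs].
  apply: le_trans (coag_term_trunc_sqr_le _ (c_ge0 r ^~ r0) K) _.
  have u_ge0 := mom2_trunc_ge0 _ (c_ge0 r ^~ r0) K.
  have u_le_B := u_le r ltac:(by rewrite r0 rs).
  by rewrite lee_fin; nra.
have : ((mom2_trunc K (c s) - mom2_trunc K (c 0%R))%:E <= (2^-1 * (2 * B ^+ 2 * (s - 0)))%:E).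
  by rewrite coag_eq EFinM; apply: lee_wpmul2l => //; rewrite lee_fin invr_ge0.
by rewrite lee_fin subr0; lra.
Qed.

Theorem lemma2p3 (R : realType) (c : R -> nat -> R) :
  smol_solution c ->
  mom2 (c 0%R) < +oo ->
  exists2 eps : R, (0 < eps)%R &
    exists M : R, forall t : R, (0 <= t <= eps)%R -> mom2 (c t) <= M%:E.
Proof.
move=> sol mom2_fin; have [c_ge0 [c_cont _]] := sol.
have c0_ge0 m : (0 <= c 0%R m)%R by exact: c_ge0.
have mom2_ge0 : 0 <= mom2 (c 0%R).
  by apply: le_trans (mom2_trunc_le_mom2 _ c0_ge0 0); rewrite lee_fin mom2_trunc_ge0.
set A := (fine (mom2 (c 0%R)) + 1)%R.
have trunc0_le K : (mom2_trunc K (c 0%R) <= A - 1)%R.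
  have := mom2_trunc_le_mom2 _ c0_ge0 K.
  by rewrite -(@fineK _ (mom2 _)) ?ge0_fin_numE // lee_fin /A; lra.
have A_ge1 : (1 <= A)%R by have := trunc0_le 0%N; rewrite /mom2_trunc big_geq //; lra.
exists (8 * A)^-1%R; first by rewrite invr_gt0; lra.
exists (2 * A)%R => t t_le; apply: mom2_le_trunc_bound => [m||K].
- by apply: c_ge0; case/andP: t_le.
- lra.
apply: (continuity_bootstrap (fun s => mom2_trunc K (c s)) (3 / 2 * A)%R _ _ _ _ _ _ t t_le).
- exact: within_continuous_mom2_trunc.
- lra.
- by have := trunc0_le K; lra.
move=> s /andP[s0 s_eps] u_le.
have A8_gt0 : (0 < 8 * A)%R by lra.
rewrite -[(8 * A)^-1%R]div1r ler_pdivlMr // in s_eps.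
have small_growth : ((2 * A) ^+ 2 * s * 2 <= A)%R.
  rewrite (_ : (2 * A) ^+ 2 * s * 2 = A * (s * (8 * A)))%R; last by ring.
  by rewrite -[leRHS]mulr1 ler_wpM2l //; lra.
have := mom2_trunc_growth _ _ _ _ sol s0 u_le; have := trunc0_le K; lra.
Qed.
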